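(* For $n\ge 0$ let $h_n$ denote the number of matching coalescent histories of the lodgepole species tree $\lambda_n$ (for $n\ge 1$), with the convention $h_0=1$. Then for all $n\ge 1$, $$h_n=(2n+1)!!-\sum_{k=0}^{n-1}(2k+1)!!\,h_{n-1-k}.$$ Moreover, for all $n\ge 1$, $$(2n+1)!!\left(\frac{n-2}{n}\right)\le h_n\le (2n+1)!!,$$ and asymptotically, as $n\to\infty$, $$h_n\sim(2n+1)!!\sim\sqrt{2}\left[\frac{2(n+1)}{e}\right]^{n+1}.$$
   Context: A species tree is a rooted binary tree whose leaves carry distinct labels. Each node $v$ of a tree $t$ has a branch directly above it: for a non-root node this is the edge joining $v$ to its parent, and the root additionally has a root branch above it. A leaf $x$ descends from a branch if $x$ lies in the subtree below that branch (i.e. below the node at the lower end of the branch, including that node). A branch $b'$ is descended from a branch $b$ if the node at the lower end of $b'$ lies in the subtree below $b$. Given a species tree $t$, a matching coalescent history of $t$ is a map $h$ from the set of internal nodes of $t$ to the set of branches of $t$ such that: (a) for every leaf $x$ and every internal node $k$, if $x$ descends from $k$ in $t$ then $x$ descends from the branch $h(k)$; (b) for all internal nodes $k_1,k_2$, if $k_2$ is a descendant of $k_1$ then the branch $h(k_2)$ is descended from or coincides with the branch $h(k_1)$. The lodgepole family $(\lambda_n)_{n\ge0}$ is defined by: $\lambda_0$ is the tree with one leaf, and for $n\ge 0$, $\lambda_{n+1}$ is obtained by attaching $\lambda_n$ and a cherry (a tree with exactly two leaves) as the two child subtrees of a new common root. Thus $\lambda_n$ has $2n+1$ leaves (labeled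 arbitrarily). Here $(2n+1)!!=(2n+1)(2n-1)\cdots 3\cdot 1$, and $a_n\sim b_n$ means $a_n/b_n\to1$. *)

From HB Require Import structures.
From mathcomp Require Import all_boot all_order all_algebra.
From mathcomp Require Import all_classical all_reals all_analysis.
Set Implicit Arguments. Unset Strict Implicit. Unset Printing Implicit Defensive.

(* Rooted binary trees (shapes; leaf labels are irrelevant for counting,
   distinct labels just identify leaves, here identified by their position). *)
Inductive btree := BLeaf | BNode of btree & btree.

(* Nodes are addressed by their path from the root (false = left, true = right). *)
Fixpoint nodes (t : btree) : seq (seq bool) :=
  match t with
  | BLeaf => [:: [::]]
  | BNode l r => [::] :: (map (cons false) (nodes l) ++ map (cons true) (nodes r))
  end.

Fixpoint leaves (t : btree) : seq (seq bool) :=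
  match t with
  | BLeaf => [:: [::]]
  | BNode l r => map (cons false) (leaves l) ++ map (cons true) (leaves r)
  end.

Fixpoint internals (t : btree) : seq (seq bool) :=
  match t with
  | BLeaf => [::]
  | BNode l r => [::] :: (map (cons false) (internals l) ++ map (cons true) (internals r))
  end.

(* Every node v has exactly one branch above it (the root branch for the root),
   so branches are identified with nodes. *)
Definition below (v w : seq bool) : bool := seq.prefix v w.

Definition internal_t (t : btree) := seq_sub (internals t).
Definition branch_t (t : btree) := seq_sub (nodes t).
Definition leaf_t (t : btree) := seq_sub (leaves t).

Definition matching_history (t : btree) (h : {ffun internal_t t -> branch_t t}) : bool :=
  [forall k : internal_t t, forall x : leaf_t t,
      below (val k) (val x) ==> below (val (h k)) (val x)]
  && [forall k1 : internal_t t, forall k2 : internal_t t,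
      below (val k1) (val k2) ==> below (val (h k1)) (val (h k2))].

Definition num_histories (t : btree) : nat :=
  #|[pred h : {ffun internal_t t -> branch_t t} | matching_history h]|.

Definition cherry := BNode BLeaf BLeaf.

Fixpoint lodgepole (n : nat) : btree :=
  match n with
  | 0 => BLeaf
  | n'.+1 => BNode (lodgepole n') cherry
  end.

Definition hlodge (n : nat) : nat :=
  if n is 0 then 1 else num_histories (lodgepole n).

Fixpoint dfact (m : nat) : nat :=
  match m with
  | 0 => 1
  | 1 => 1
  | (m'.+2) as k => k * dfact m'
  end.

From HB Require Import structures.
From mathcomp Require Import all_boot all_order all_algebra.
From mathcomp Require Import all_classical all_reals all_analysis.
From mathcomp Require Import zify ring lra.
Import Order.TTheory GRing.Theory Num.Theory.
Import numFieldNormedType.Exports.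
Local Open Scope classical_set_scope.
Local Open Scope ring_scope.
Set Implicit Arguments. Unset Strict Implicit. Unset Printing Implicit Defensive.

(* A matching history is determined by the depths of its branches: h(k) is the
   ancestor of k at depth d(k) <= |k|, and h is matching iff d is monotone along the
   tree.  Counting such depth functions, with a slack s (how far above the root a
   branch may sit), gives for the lodgepole tree G_{n+1}(s) = sum_{j<=s} (j+2) G_n(j+1)
   and h_n = G_n(0).  The companion recurrence with one more term has the closed form
   K_n(s) = (2n-1)!! C(s+2n+1, 2n), so K_n(0) = (2n+1)!!, and splitting K_n(s) at the
   first use of the extra term yields the recursion for h_n.  As k |-> (2k+1)!! is
   log-concave, the convolution in the recursion is at most 2 (2n+1)!!/n, which gives
   the bounds and h_n/(2n+1)!! -> 1.  Finally (2m-1)!!/(sqrt 2 (2m/e)^m) equals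
   exp(u(2m) - u(m)) with u(k) = ln k! + k - (k+1/2) ln k, and Taylor bounds on
   ln(1+x) give |u(k) - u(k+1)| <= 1/(4k^2), so this ratio tends to 1. *)

Section Histories.
Local Open Scope nat_scope.

Lemma exists_leaf t : exists x, x \in leaves t.
Proof.
elim: t => [|l [x Hx] r _]; first by exists [::]; rewrite inE.
by exists (false :: x); rewrite /= mem_cat map_f.
Qed.

Lemma internal_leaf_children t k : k \in internals t ->
  (exists x, k ++ false :: x \in leaves t) /\ (exists y, k ++ true :: y \in leaves t).
Proof.
elim: t k => [|l IHl r IHr] k //=.
rewrite inE mem_cat => /orP[/eqP->|/orP[]/mapP[k' Hk' ->]].
- have [x Hx] := exists_leaf l; have [y Hy] := exists_leaf r.
  by split; [exists x|exists y]; rewrite /= mem_cat map_f ?orbT.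
- have [[x Hx] [y Hy]] := IHl _ Hk'.
  by split; [exists x|exists y]; rewrite /= mem_cat (map_f (cons false)).
- have [[x Hx] [y Hy]] := IHr _ Hk'.
  by split; [exists x|exists y]; rewrite /= mem_cat (map_f (cons true)) ?orbT.
Qed.

Lemma prefix_fork (v k x y : seq bool) :
  seq.prefix v (k ++ false :: x) -> seq.prefix v (k ++ true :: y) -> seq.prefix v k.
Proof.
elim: k v => [|c k IH] [|b v] //=.
- by move=> /andP[/eqP-> _] /andP[].
- by move=> /andP[/eqP-> H1] /andP[_ H2]; rewrite eqxx (IH _ H1 H2).
Qed.

Lemma prefix_internal_node t k v : k \in internals t -> seq.prefix v k -> v \in nodes t.
Proof.
elim: t k v => [|l IHl r IHr] k v //=.
rewrite inE mem_cat => /orP[/eqP->|/orP[]/mapP[k' Hk' ->]].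
- by rewrite prefixs0 => /eqP->; rewrite inE eqxx.
- case: v => [|b v]; first by rewrite inE eqxx.
  rewrite prefix_cons => /andP[/eqP-> Hv].
  by rewrite inE mem_cat (map_f (cons false) (IHl _ _ Hk' Hv)) orbT.
- case: v => [|b v]; first by rewrite inE eqxx.
  rewrite prefix_cons => /andP[/eqP-> Hv].
  by rewrite inE mem_cat (map_f (cons true) (IHr _ _ Hk' Hv)) !orbT.
Qed.

Lemma prefix_sizeE (a b c : seq bool) : seq.prefix a c -> seq.prefix b c ->
  seq.prefix a b = (size a <= size b).
Proof.
elim: c a b => [|z c IH] [|x a] [|y b] //=.
by move=> /andP[/eqP-> Ha] /andP[/eqP-> Hb]; rewrite eqxx IH.
Qed.

Lemma prefix_take_leq m n (s : seq bool) : m <= n -> seq.prefix (take m s) (take n s).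
Proof. by move=> mn; rewrite -(take_takel _ mn) prefix_take. Qed.

Section MatchingHistory.
Variables (t : btree) (h : {ffun internal_t t -> branch_t t}).
Hypothesis hP : matching_history h.

(* The two children of k carry leaves below k, and h(k) lies above both of them. *)
Lemma history_prefix k : seq.prefix (val (h k)) (val k).
Proof.
move: hP => /andP[/forallP Ha _].
have [[x Hx] [y Hy]] := internal_leaf_children (ssvalP k).
have H1 := implyP (forallP (Ha k) (SeqSub Hx)) (prefix_prefix _ _).
have H2 := implyP (forallP (Ha k) (SeqSub Hy)) (prefix_prefix _ _).
exact: prefix_fork H1 H2.
Qed.

Lemma history_mono k1 k2 :
  seq.prefix (val k1) (val k2) -> seq.prefix (val (h k1)) (val (h k2)).
Proof. by move: hP => /andP[_ /forallP Hb]; apply/implyP/(forallP (Hb k1)). Qed.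

Lemma history_depth_mono k1 k2 :
  seq.prefix (val k1) (val k2) -> size (val (h k1)) <= size (val (h k2)).
Proof.
move=> k12; rewrite -(prefix_sizeE _ (history_prefix k2)) ?history_mono //.
exact: prefix_trans (history_prefix k1) k12.
Qed.

End MatchingHistory.

(* [f k] is [s] plus the depth of the branch [h(k)], which may lie up to [s] levels
   above the root. *)
Definition depth_fun t s (f : seq bool -> nat) :=
  all (fun k => f k <= size k + s) (internals t) &&
  all (fun k1 => all (fun k2 => seq.prefix k1 k2 ==> (f k1 <= f k2)) (internals t))
      (internals t).

Definition depth_node (c : nat) (fl fr : seq bool -> nat) (k : seq bool) : nat :=
  if k is b :: k' then c + (if b then fr k' else fl k') else c.

Lemma depth_fun_node l r s c fl fr : c <= s ->
  depth_fun l (s - c).+1 fl -> depth_fun r (s - c).+1 fr ->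
  depth_fun (BNode l r) s (depth_node c fl fr).
Proof.
move=> cs /andP[/allP Bl /allP Ml] /andP[/allP Br /allP Mr].
apply/andP; split; apply/allP => k /=; rewrite inE mem_cat =>
  /orP[/eqP->|/orP[]/mapP[k' Hk' ->]] /=.
- lia.
- by have := Bl _ Hk'; lia.
- by have := Br _ Hk'; lia.
- rewrite leqnn /=; apply/allP => k2; rewrite mem_cat => /orP[]/mapP[k2' _ ->] /=; lia.
- apply/allP => k2; rewrite mem_cat => /orP[]/mapP[k2' Hk2' ->] //=.
  by rewrite leq_add2l; apply: (allP (Ml _ Hk')).
- apply/allP => k2; rewrite mem_cat => /orP[]/mapP[k2' Hk2' ->] //=.
  by rewrite leq_add2l; apply: (allP (Mr _ Hk')).
Qed.

Lemma depth_fun_nodeE l r s f : depth_fun (BNode l r) s f ->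
  [/\ f [::] <= s,
      {in internals l, forall k, f [::] <= f (false :: k)},
      {in internals r, forall k, f [::] <= f (true :: k)},
      depth_fun l (s - f [::]).+1 (fun k => f (false :: k) - f [::]) &
      depth_fun r (s - f [::]).+1 (fun k => f (true :: k) - f [::])].
Proof.
move=> /andP[/allP B /allP M].
have root_in : [::] \in internals (BNode l r) by rewrite inE eqxx.
have inl k : k \in internals l -> false :: k \in internals (BNode l r).
  by move=> Hk; rewrite /= inE mem_cat (map_f (cons false) Hk) orbT.
have inr k : k \in internals r -> true :: k \in internals (BNode l r).
  by move=> Hk; rewrite /= inE mem_cat (map_f (cons true) Hk) !orbT.
have root_le k : k \in internals (BNode l r) -> f [::] <= f k.
  by move=> Hk; have := allP (M _ root_in) _ Hk; rewrite prefix0s.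
have sub_depth b sub : {in internals sub, forall k, b :: k \in internals (BNode l r)} ->
    depth_fun sub (s - f [::]).+1 (fun k => f (b :: k) - f [::]).
  move=> inS; apply/andP; split; apply/allP => k Hk /=.
    by have := B _ (inS _ Hk); have := B _ root_in; rewrite /=; lia.
  apply/allP => k2 Hk2; apply/implyP => pk.
  have := implyP (allP (M _ (inS _ Hk)) _ (inS _ Hk2)); rewrite /= eqxx pk => /(_ isT).
  lia.
split; [exact: B root_in | by move=> k /inl /root_le | by move=> k /inr /root_le | |].
- exact: sub_depth inl.
- exact: sub_depth inr.
Qed.

Definition graft (c : nat) (dl dr : seq nat) : seq nat :=
  c :: map (addn c) dl ++ map (addn c) dr.

Fixpoint depth_seqs (t : btree) (s : nat) : seq (seq nat) :=
  match t with
  | BLeaf => [:: [::]]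
  | BNode l r => flatten [seq [seq graft (s - j) dl dr
                               | dl <- depth_seqs l j.+1, dr <- depth_seqs r j.+1]
                         | j <- iota 0 s.+1]
  end.

Lemma depth_seqs_node l r s : depth_seqs (BNode l r) s =
  flatten [seq [seq graft (s - j) dl dr | dl <- depth_seqs l j.+1, dr <- depth_seqs r j.+1]
          | j <- iota 0 s.+1].
Proof. by []. Qed.

Lemma depth_seqsP t s d :
  d \in depth_seqs t s <-> exists2 f, d = map f (internals t) & depth_fun t s f.
Proof.
elim: t s d => [|l IHl r IHr] s d.
  by rewrite /= inE; split => [/eqP->|[f -> _]] //; exists (fun _ => 0).
split.
- move=> /flatten_mapP[j Hj] /allpairsP[[dl dr] [/= Hl Hr ->]].
  have [fl -> Vl] := (IHl _ _).1 Hl; have [fr -> Vr] := (IHr _ _).1 Hr.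
  have js : j <= s by move: Hj; rewrite mem_iota; lia.
  exists (depth_node (s - j) fl fr); first by rewrite /graft /= map_cat -!map_comp.
  by apply: depth_fun_node; rewrite ?subKn //; lia.
- move=> [f -> V]; have [f0s f0l f0r Vl Vr] := depth_fun_nodeE V.
  apply/flatten_mapP; exists (s - f [::]); first by rewrite mem_iota; lia.
  rewrite subKn //; apply/allpairsP.
  exists (map (fun k => f (false :: k) - f [::]) (internals l),
          map (fun k => f (true :: k) - f [::]) (internals r)); split.
  + by apply/IHl; eexists.
  + by apply/IHr; eexists.
  rewrite /graft /= map_cat -!map_comp; congr (_ :: _ ++ _); apply/eq_in_map => k Hk /=.
    by rewrite subnKC // f0l.
  by rewrite subnKC // f0r.
Qed.

Lemma size_depth_seq t s d : d \in depth_seqs t s -> size d = size (internals t).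
Proof. by move=> /depth_seqsP[f -> _]; rewrite size_map. Qed.

Lemma uniq_flatten_key (I T : eqType) (js : seq I) (B : I -> seq T) (key : T -> I) :
  uniq js -> {in js, forall j, uniq (B j)} -> {in js, forall j x, x \in B j -> key x = j} ->
  uniq (flatten [seq B j | j <- js]).
Proof.
elim: js => //= j js IH /andP[jn Ujs] UB KB.
rewrite cat_uniq UB ?mem_head //= IH //; first last.
- by move=> j' Hj'; apply: KB; rewrite inE Hj' orbT.
- by move=> j' Hj'; apply: UB; rewrite inE Hj' orbT.
rewrite andbT; apply/hasPn => x /flatten_mapP[j' Hj' Hx']; apply/negP => Hx.
have E1 := KB j (mem_head _ _) x Hx.
have E2 : key x = j' by apply: KB Hx'; rewrite inE Hj' orbT.
by move: jn; rewrite -E1 E2 Hj'.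
Qed.

Lemma uniq_depth_seqs t s : uniq (depth_seqs t s).
Proof.
elim: t s => [|l IHl r IHr] s //; rewrite depth_seqs_node.
apply: (uniq_flatten_key (key := fun d => s - head 0 d)); first exact: iota_uniq.
- move=> j _; apply: allpairs_uniq => // -[dl dr] [dl' dr'].
  move=> /allpairsP[[a b] [/= Ha Hb [-> ->]]] /allpairsP[[a' b'] [/= Ha' Hb' [-> ->]]].
  move=> /= [] /eqP; rewrite eqseq_cat ?size_map ?(size_depth_seq Ha) ?(size_depth_seq Ha') //.
  by move=> /andP[/eqP/(inj_map (@addnI _)) -> /eqP/(inj_map (@addnI _)) ->].
- move=> j Hj d /allpairsP[p [_ _ ->]] /=; move: Hj; rewrite mem_iota; lia.
Qed.

Lemma size_depth_seqs_node l r s :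
  size (depth_seqs (BNode l r) s) =
  \sum_(j < s.+1) size (depth_seqs l j.+1) * size (depth_seqs r j.+1).
Proof.
rewrite depth_seqs_node size_flatten /shape -map_comp sumnE big_map.
rewrite -(big_mkord xpredT (fun j => size (depth_seqs l j.+1) * size (depth_seqs r j.+1))).
by rewrite /index_iota subn0; apply: eq_bigr => j _; rewrite /= size_allpairs.
Qed.

Definition history_depths t (h : {ffun internal_t t -> branch_t t}) : seq nat :=
  [seq if @insub _ _ (internal_t t) k is Some x then size (val (h x)) else 0
    | k <- internals t].

Lemma history_depths_inj t (h1 h2 : {ffun internal_t t -> branch_t t}) :
  matching_history h1 -> matching_history h2 ->
  history_depths h1 = history_depths h2 -> h1 = h2.
Proof.
move=> H1 H2 E; apply/ffunP => x; apply: val_inj.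
have := (eq_in_map _ _ _).2 E (val x) (ssvalP x); rewrite valK => Es.
by move: (history_prefix H1 x) (history_prefix H2 x); rewrite !prefixE Es => /eqP<- /eqP->.
Qed.

Lemma history_depths_mem t (h : {ffun internal_t t -> branch_t t}) :
  matching_history h -> history_depths h \in depth_seqs t 0.
Proof.
move=> hP; apply/depth_seqsP; eexists; first reflexivity.
apply/andP; split; apply/allP => k Hk.
  by case: insubP => [x _ <-|/negP//]; rewrite addn0; apply/size_prefix/history_prefix.
apply/allP => k2 Hk2; apply/implyP => pk.
case: insubP => [x _ Ex|/negP//]; case: insubP => [y _ Ey|/negP//].
by apply: history_depth_mono; rewrite // Ex Ey.
Qed.

Lemma depth_seq_history t d : d \in depth_seqs t 0 ->
  exists2 h : {ffun internal_t t -> branch_t t}, matching_history h & d = history_depths h.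
Proof.
move=> /depth_seqsP[f -> /andP[/allP Bd /allP Md]].
have Hn (x : internal_t t) : take (f (val x)) (val x) \in nodes t.
  exact: prefix_internal_node (ssvalP x) (prefix_take _ _).
exists [ffun x : internal_t t => (SeqSub (Hn x) : branch_t t)].
  apply/andP; split; apply/forallP => k; apply/forallP => x;
    apply/implyP => Hkx; rewrite !ffunE /=.
    exact: prefix_trans (prefix_take _ _) Hkx.
  have f12 := implyP (allP (Md _ (ssvalP k)) _ (ssvalP x)) Hkx.
  have f1 := Bd _ (ssvalP k); rewrite addn0 in f1.
  have Ek : take (size (val k)) (val x) = val k by apply/eqP; rewrite -prefixE.
  by rewrite /below -{2}Ek take_takel // prefix_take_leq.
apply/eq_in_map => k Hk; case: insubP => [x _ Ex|/negP//].
rewrite ffunE /= size_take Ex; have := Bd _ Hk; rewrite addn0.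
by rewrite leq_eqVlt => /orP[/eqP->|->]; rewrite ?ltnn.
Qed.

Lemma num_histories_depth_seqs t : num_histories t = size (depth_seqs t 0).
Proof.
rewrite /num_histories cardE -(size_map (@history_depths t)).
apply/perm_size/uniq_perm; last 1 first.
- move=> d; apply/mapP/idP => [[h Hh ->]|/depth_seq_history[h Hh ->]].
    by apply: history_depths_mem; rewrite mem_enum in Hh.
  by exists h; rewrite ?mem_enum.
- rewrite map_inj_in_uniq ?enum_uniq // => h1 h2; rewrite !mem_enum.
  exact: history_depths_inj.
- exact: uniq_depth_seqs.
Qed.

End Histories.

Section LodgepoleCount.
Local Open Scope nat_scope.

Lemma size_depth_seqs_cherry s : size (depth_seqs cherry s) = s.+1.
Proof.
rewrite size_depth_seqs_node; under eq_bigr => j _ do rewrite muln1.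
by rewrite big_const_ord iter_addn_0 mul1n.
Qed.

Fixpoint lodge_count n s :=
  if n is n'.+1 then \sum_(j < s.+1) j.+2 * lodge_count n' j.+1 else 1.

Lemma lodge_countE n s : size (depth_seqs (lodgepole n) s) = lodge_count n s.
Proof.
elim: n s => [|n IH] s //.
change (lodgepole n.+1) with (BNode (lodgepole n) cherry).
by rewrite size_depth_seqs_node; apply: eq_bigr => j _; rewrite IH size_depth_seqs_cherry mulnC.
Qed.

Lemma hlodgeE n : hlodge n = lodge_count n 0.
Proof. by case: n => [|n] //; rewrite /hlodge num_histories_depth_seqs lodge_countE. Qed.

(* The recurrence of [lodge_count] plus the term [dfact_count n' 0]; splitting at the
   first level where that term is used gives [dfact_count_split]. *)
Fixpoint dfact_count n s :=
  if n is n'.+1 then \sum_(j < s.+2) j.+1 * dfact_count n' j else 1.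

Lemma dfact_count_split n s :
  dfact_count n s = lodge_count n s + \sum_(j < n) lodge_count j s * dfact_count (n - j.+1) 0.
Proof.
elim: n s => [|n IH] s; first by rewrite big_ord0 addn0.
rewrite /= big_ord_recl [X in _ = _ + X]big_ord_recl /= !mul1n subn1 /= addnCA.
congr (_ + _).
transitivity (\sum_(i < s.+1) (i.+2 * lodge_count n i.+1 +
    \sum_(j < n) i.+2 * lodge_count j i.+1 * dfact_count (n - j.+1) 0)).
  apply: eq_bigr => i _; rewrite IH mulnDr big_distrr /=; congr (_ + _).
  by apply: eq_bigr => j _; rewrite mulnA.
rewrite big_split /= exchange_big; congr (_ + _).
by apply: eq_bigr => j _; rewrite big_distrl.
Qed.

Lemma sum_mul_bin m s :
  \sum_(i < s.+1) i.+1 * 'C(i.+1 + m, m) = m.+1 * 'C(s.+2 + m, m.+2).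
Proof.
elim: s => [|s IH]; first by rewrite big_ord1 mul1n add1n binSn add2n binn muln1.
rewrite big_ord_recr /= IH (_ : s.+3 + m = (s.+2 + m).+1) // [in RHS]binS mulnDr.
by congr (_ + _); rewrite mul_bin_left addnK.
Qed.

Lemma dfact_odd n : dfact (2 * n).+1 = (2 * n).+1 * dfact (2 * n - 1).
Proof.
case: n => [|n] //.
rewrite (_ : 2 * n.+1 - 1 = (2 * n).+1); last lia.
by rewrite (_ : (2 * n.+1).+1 = (2 * n).+3); last lia.
Qed.

Lemma dfact_countE n s : dfact_count n s = dfact (2 * n - 1) * 'C(s.+1 + 2 * n, 2 * n).
Proof.
elim: n s => [|n IH] s; first by rewrite muln0 bin0.
rewrite /=; under eq_bigr => i _ do rewrite IH mulnCA.
rewrite -big_distrr /= sum_mul_bin mulnA (mulnC (dfact _)) -dfact_odd.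
rewrite (_ : 2 * n.+1 - 1 = (2 * n).+1); last lia.
rewrite (_ : s.+1 + 2 * n.+1 = s.+3 + 2 * n); last lia.
by rewrite (_ : 2 * n.+1 = (2 * n).+2); last lia.
Qed.

Definition odd_dfact k := dfact (2 * k).+1.
Arguments odd_dfact : simpl never.

Lemma dfact_count0 n : dfact_count n 0 = odd_dfact n.
Proof. by rewrite dfact_countE add1n binSn mulnC -dfact_odd. Qed.

Lemma odd_dfactS k : odd_dfact k.+1 = (2 * k).+3 * odd_dfact k.
Proof. by rewrite /odd_dfact (_ : (2 * k.+1).+1 = (2 * k).+3); last lia. Qed.

Lemma dfact_gt0 k : 0 < dfact k.
Proof.
suff: (0 < dfact k) && (0 < dfact k.+1) by case/andP.
by elim: k => [//|k /andP[H1 H2]]; rewrite H2 /= muln_gt0 H1.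
Qed.

Lemma odd_dfact_lodge_conv n :
  odd_dfact n = hlodge n + \sum_(k < n) odd_dfact k * hlodge (n - 1 - k).
Proof.
rewrite -dfact_count0 dfact_count_split hlodgeE; congr (_ + _).
rewrite (reindex_inj rev_ord_inj) /=; apply: eq_bigr => j _.
have jn := ltn_ord j; rewrite dfact_count0 -hlodgeE mulnC.
by congr (_ * hlodge _ ); [congr odd_dfact|]; lia.
Qed.

Lemma hlodge_le n : hlodge n <= odd_dfact n.
Proof. by rewrite odd_dfact_lodge_conv leq_addr. Qed.

Lemma odd_dfact_log_concave x y d : y <= x ->
  odd_dfact x * odd_dfact (y + d) <= odd_dfact (x + d) * odd_dfact y.
Proof.
move=> yx; elim: d => [|d IH]; first by rewrite !addn0 mulnC.
rewrite !addnS !odd_dfactS mulnCA -!mulnA; apply: leq_mul; first lia.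
exact: IH.
Qed.

Lemma odd_dfact_mul_mid m j : 0 < j < m ->
  (2 * m).+1 * (odd_dfact j * odd_dfact (m - j)) <= 3 * odd_dfact m.
Proof.
move=> /andP[j0 jm].
have := @odd_dfact_log_concave (m - j) 1 j.-1 ltac:(lia).
rewrite (_ : 1 + j.-1 = j); last lia.
rewrite (_ : m - j + j.-1 = m.-1); last lia.
have -> : odd_dfact 1 = 3 by [].
have -> : odd_dfact m = (2 * m).+1 * odd_dfact m.-1.
  by rewrite -[in LHS](prednK (ltn_trans j0 jm)) odd_dfactS; congr (_ * _); lia.
nia.
Qed.

(* Scaled by [2m+1], the end terms give [2 (2m+1) (2m+1)!!] and each middle one at most [3 (2m+1)!!]. *)
Lemma odd_dfact_conv_le m :
  (2 * m).+1 * \sum_(j < m.+1) odd_dfact j * odd_dfact (m - j)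
  <= (2 * (2 * m).+1 + 3 * m) * odd_dfact m.
Proof.
case: m => [|m]; first by rewrite big_ord1.
rewrite -(big_mkord xpredT (fun j => odd_dfact j * odd_dfact (m.+1 - j))).
rewrite big_nat_recl // big_nat_recr // subn0 subnn (_ : odd_dfact 0 = 1) // mul1n muln1.
have mid : (2 * m.+1).+1 * \sum_(0 <= i < m) odd_dfact i.+1 * odd_dfact (m.+1 - i.+1)
    <= 3 * m * odd_dfact m.+1.
  rewrite big_distrr /=.
  apply: (@leq_trans (\sum_(0 <= i < m) 3 * odd_dfact m.+1)).
    rewrite big_nat [X in _ <= X]big_nat; apply: leq_sum => i /andP[_ im].
    by apply: odd_dfact_mul_mid; lia.
  by rewrite big_const_nat iter_addn_0 subn0; nia.
move: mid; set X := odd_dfact m.+1; set Y := \sum_(0 <= i < m) _.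
rewrite /= -/Y; nia.
Qed.

Lemma lodge_conv_le n : 0 < n ->
  n * \sum_(k < n) odd_dfact k * hlodge (n - 1 - k) <= 2 * odd_dfact n.
Proof.
case: n => [//|m] _.
have dom : \sum_(k < m.+1) odd_dfact k * hlodge (m.+1 - 1 - k)
    <= \sum_(j < m.+1) odd_dfact j * odd_dfact (m - j).
  apply: leq_sum => k _; rewrite leq_mul2l (_ : m.+1 - 1 - k = m - k) ?hlodge_le ?orbT //.
  lia.
have conv := odd_dfact_conv_le m.
rewrite odd_dfactS -(@leq_pmul2l (2 * m).+1) //.
move: dom conv; set S := \sum_(k < m.+1) _; set C := \sum_(j < m.+1) _; set X := odd_dfact m.
move=> dom conv.
apply: (@leq_trans (m.+1 * ((2 * m).+1 * C))); first by nia.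
apply: (@leq_trans (m.+1 * ((2 * (2 * m).+1 + 3 * m) * X))); first by rewrite leq_mul2l conv orbT.
by rewrite !mulnA; apply: leq_mul => //; nia.
Qed.

Lemma fact_double m : (2 * m)`! = 2 ^ m * m`! * dfact (2 * m - 1).
Proof.
elim: m => [//|m IH].
rewrite (_ : 2 * m.+1 = (2 * m).+2); last lia.
rewrite (_ : (2 * m).+2 - 1 = (2 * m).+1); last lia.
rewrite !factS IH expnS dfact_odd.
rewrite (_ : (2 * m).+2 = 2 * m.+1); last lia.
rewrite [2 * m.+1]mulnS; lia.
Qed.

End LodgepoleCount.

Section Asymptotics.
Variable R : realType.

Lemma le_derive_ge0 (g dg : R -> R) (a y : R) : a <= y ->
  (forall x, a <= x -> is_derive x 1 g (dg x)) -> (forall x, a <= x -> 0 <= dg x) ->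
  g a <= g y.
Proof.
move=> ay g'E g'_ge0.
have g'E_itv x : x \in `]a, y[ -> is_derive x 1 g (dg x).
  by rewrite in_itv /= => /andP[/ltW ax _]; apply: g'E.
have g_cont : {within `[a, y], continuous g}.
  apply: derivable_within_continuous => x; rewrite in_itv /= => /andP[ax _].
  by case: (g'E x ax).
have [c + mvt] := MVT_segment ay g'E_itv g_cont.
rewrite in_itv /= => /andP[ac _].
by rewrite -subr_ge0 mvt mulr_ge0 ?g'_ge0 ?subr_ge0.
Qed.

Lemma ln1Dx_le3 (y : R) : 0 <= y -> ln (1 + y) <= y - y ^+ 2 / 2 + y ^+ 3 / 3.
Proof.
move=> y0.
have := @le_derive_ge0 (fun z => z - z ^+ 2 / 2 + z ^+ 3 / 3 - ln (1 + z))
  (fun x => x ^+ 3 / (1 + x)) 0 y y0.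
rewrite /= addr0 ln1 expr0n /= expr0n /= !mul0r subr0 addr0 subr0 subr_ge0; apply.
- move=> x x0; have := @is_derive1_ln R (1 + x) ltac:(lra) => ln'.
  by apply: trigger_derive; rewrite /GRing.scale /=; field; lra.
- by move=> x x0; apply: divr_ge0; [apply: exprn_ge0 | lra].
Qed.

Lemma ln1Dx_ge4 (y : R) : 0 <= y -> y - y ^+ 2 / 2 + y ^+ 3 / 3 - y ^+ 4 / 4 <= ln (1 + y).
Proof.
move=> y0.
have := @le_derive_ge0 (fun z => ln (1 + z) - (z - z ^+ 2 / 2 + z ^+ 3 / 3 - z ^+ 4 / 4))
  (fun x => x ^+ 4 / (1 + x)) 0 y y0.
rewrite /= addr0 ln1 !expr0n /= !mul0r !subr0 addr0 subrr subr_ge0; apply.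
- move=> x x0; have := @is_derive1_ln R (1 + x) ltac:(lra) => ln'.
  by apply: trigger_derive; rewrite /GRing.scale /=; field; lra.
- by move=> x x0; apply: divr_ge0; [apply: exprn_ge0 | lra].
Qed.

Lemma ln1Dx_mid_err (y : R) : 0 < y <= 1 ->
  `|(y^-1 + 2^-1) * ln (1 + y) - 1| <= y ^+ 2 / 4.
Proof.
move=> /andP[y0 y1].
have up := ln1Dx_le3 (ltW y0); have lo := ln1Dx_ge4 (ltW y0).
set l := ln (1 + y) in up lo *.
have -> : (y^-1 + 2^-1) * l - 1 = ((2 + y) * l - 2 * y) / (2 * y) by field; lra.
have y3 : 0 <= y ^+ 3 by apply: exprn_ge0; lra.
have err : `|(2 + y) * l - 2 * y| <= y ^+ 3 / 2.
  have up' : (2 + y) * l <= (2 + y) * (y - y ^+ 2 / 2 + y ^+ 3 / 3).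
    by rewrite ler_wpM2l //; lra.
  have lo' : (2 + y) * (y - y ^+ 2 / 2 + y ^+ 3 / 3 - y ^+ 4 / 4) <= (2 + y) * l.
    by rewrite ler_wpM2l //; lra.
  rewrite ler_norml; apply/andP; split; nra.
rewrite normrM normfV (ger0_norm (_ : 0 <= 2 * y)); last lra.
rewrite ler_pdivrMr; last lra.
by apply: (le_trans err); rewrite le_eqVlt; apply/orP; left; apply/eqP; field.
Qed.

(* Only differences of [stirling_err] occur. *)
Definition stirling_err (k : nat) : R := ln k`!%:R + k%:R - (k%:R + 2^-1) * ln k%:R.

Lemma stirling_errB k : (0 < k)%N ->
  stirling_err k - stirling_err k.+1 = (k%:R + 2^-1) * ln (1 + k%:R^-1) - 1.
Proof.
move=> k0; have kp : 0 < k%:R :> R by rewrite ltr0n.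
have lnS : ln k.+1`!%:R = ln k.+1%:R + ln k`!%:R :> R.
  by rewrite factS natrM lnM // posrE ltr0n ?fact_gt0.
have ln1D : ln (1 + k%:R^-1) = ln k.+1%:R - ln k%:R :> R.
  by rewrite -ln_div ?posrE ?ltr0n //; congr ln; rewrite -natr1; field; lra.
by rewrite /stirling_err lnS ln1D -!natr1; ring.
Qed.

Lemma stirling_err_step k : (0 < k)%N ->
  `|stirling_err k - stirling_err k.+1| <= (k%:R^-1) ^+ 2 / 4.
Proof.
move=> k0; have kp : 0 < k%:R :> R by rewrite ltr0n.
rewrite stirling_errB //; have := @ln1Dx_mid_err (k%:R^-1); rewrite invrK; apply.
by rewrite invr_gt0 kp /= invf_le1 // ler1n.
Qed.

Lemma stirling_err_double m : (0 < m)%N ->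
  `|stirling_err m - stirling_err (2 * m)| <= (4 * m%:R)^-1.
Proof.
move=> m0; have mp : 0 < m%:R :> R by rewrite ltr0n.
have -> : stirling_err m - stirling_err (2 * m) =
    \sum_(m <= k < 2 * m) (stirling_err k - stirling_err k.+1).
  have := @telescope_sumr _ m (2 * m) (fun k => - stirling_err k) ltac:(lia).
  under eq_bigr do rewrite opprK addrC.
  by move=> ->; rewrite opprK addrC.
apply: le_trans (ler_norm_sum _ _ _) _.
apply: (@le_trans _ _ (\sum_(m <= k < 2 * m) (m%:R^-1) ^+ 2 / 4)).
  rewrite big_nat [X in _ <= X]big_nat; apply: ler_sum => k /andP[mk _].
  apply: le_trans (stirling_err_step (leq_trans m0 mk)) _.
  rewrite ler_pM2r // ler_sqr ?nnegrE ?invr_ge0 ?ler0n //.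
  by rewrite lef_pV2 ?posrE ?ltr0n ?ler_nat //; lia.
rewrite sumr_const_nat -mulr_natr (_ : (2 * m - m)%N = m); last lia.
by rewrite le_eqVlt; apply/orP; left; apply/eqP; field; lra.
Qed.

Lemma cvgr_dist_le_div (v : nat -> R) (l C : R) : 0 <= C ->
  (forall n, (0 < n)%N -> `|v n - l| <= C / n%:R) -> v @ \oo --> l.
Proof.
move=> C0 vC; apply/cvgrPdist_le => e e0.
have Ce : 0 <= C / e by apply: divr_ge0 => //; apply: ltW.
have Cen := archi_boundP Ce.
near=> n.
have n0 : (0 < n)%N by near: n; apply: nbhs_infty_gt.
have nN : (Num.bound (C / e) <= n)%N by near: n; apply: nbhs_infty_ge.
rewrite distrC; apply: le_trans (vC n n0) _.
rewrite ler_pdivrMr ?ltr0n // mulrC -ler_pdivrMr //.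
by apply/ltW/(lt_le_trans Cen); rewrite ler_nat.
Unshelve. all: by end_near.
Qed.

(* With m = n + 1: (2m-1)!! = (2m)! / (2^m m!), and the [ln] of both sides expands
   in terms of [stirling_err (2m)] and [stirling_err m]. *)
Lemma dfact_stirling_ratio n :
  (dfact (2 * n + 1))%:R / (Num.sqrt 2 * (2 * n.+1%:R / expR 1) ^+ n.+1)
  = expR (stirling_err (2 * n.+1) - stirling_err n.+1) :> R.
Proof.
set m := n.+1; rewrite (_ : (2 * n + 1 = 2 * m - 1)%N); last by rewrite /m; lia.
set D := (dfact (2 * m - 1))%:R : R.
have Dp : 0 < D by rewrite ltr0n dfact_gt0.
have mp : 0 < m%:R :> R by rewrite ltr0n.
have ep : 0 < expR 1 :> R by apply: expR_gt0.
have s2p : 0 < Num.sqrt 2 :> R by rewrite sqrtr_gt0.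
have qp : 0 < 2 * m%:R / expR 1 :> R by rewrite divr_gt0 // mulr_gt0.
rewrite -[LHS]lnK; last by rewrite posrE divr_gt0 // mulr_gt0 // exprn_gt0.
congr expR.
rewrite ln_div ?posrE ?mulr_gt0 ?exprn_gt0 // lnM ?posrE ?exprn_gt0 // lnXn //.
rewrite ln_div ?posrE ?mulr_gt0 // expRK lnM ?posrE //.
have ln_sqrt2 : ln (Num.sqrt 2) = ln 2 / 2 :> R.
  have : ln (Num.sqrt 2 ^+ 2) = ln (2 : R) by rewrite sqr_sqrtr.
  by rewrite lnXn // => <-; rewrite -mulr_natr; field.
have ln_fact2m : ln (2 * m)`!%:R = ln 2 *+ m + ln m`!%:R + ln D :> R.
  have fp : 0 < m`!%:R :> R by rewrite ltr0n fact_gt0.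
  have tp : 0 < 2 ^+ m :> R by rewrite exprn_gt0.
  rewrite fact_double natrM (natrM R (2 ^ m)%N) natrX lnM ?posrE ?mulr_gt0 //.
  by rewrite lnM ?posrE // lnXn.
have ln2m : ln (2 * m)%:R = ln 2 + ln m%:R :> R by rewrite natrM lnM ?posrE ?ltr0n.
rewrite ln_sqrt2 /stirling_err ln_fact2m ln2m (natrM R 2 m).
move: (ln (2 : R)) (ln (m%:R : R)) (ln (m`!%:R : R)) (ln D) => a b c d.
ring.
Qed.

End Asymptotics.

Section Proposition1.
Variable R : realType.
Let a n : R := (dfact (2 * n + 1)%N)%:R.
Let hconv n : R := \sum_(k < n) a k * (hlodge (n - 1 - k)%N)%:R.

Lemma natr_odd_dfact n : (odd_dfact n)%:R = a n.
Proof. by rewrite /a addn1. Qed.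

Lemma dfact_odd_gt0 n : 0 < a n.
Proof. by rewrite -natr_odd_dfact ltr0n dfact_gt0. Qed.

Lemma hconvE n : hconv n = (\sum_(k < n) odd_dfact k * hlodge (n - 1 - k))%:R.
Proof. by rewrite natr_sum; apply: eq_bigr => k _; rewrite natrM natr_odd_dfact. Qed.

Lemma hlodge_rec n : (hlodge n)%:R = a n - hconv n.
Proof. by rewrite hconvE -natr_odd_dfact odd_dfact_lodge_conv natrD addrK. Qed.

Lemma hconv_le n : (0 < n)%N -> n%:R * hconv n <= 2 * a n.
Proof. by move=> n0; rewrite hconvE -natr_odd_dfact -!natrM ler_nat lodge_conv_le. Qed.

Lemma hlodge_lower n : (1 <= n)%N -> a n * ((n%:R - 2) / n%:R) <= (hlodge n)%:R.
Proof.
move=> n0; have np : 0 < n%:R :> R by rewrite ltr0n.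
have := hconv_le n0; have := dfact_odd_gt0 n.
rewrite hlodge_rec (_ : a n * ((n%:R - 2) / n%:R) = a n - 2 * a n / n%:R); last by field; lra.
by move=> _ hconvn; rewrite lerD2l lerN2 ler_pdivlMr // mulrC.
Qed.

Lemma hlodge_upper n : (hlodge n)%:R <= a n.
Proof. by rewrite -natr_odd_dfact ler_nat hlodge_le. Qed.

Lemma hlodge_ratio_cvg : (fun n => (hlodge n)%:R / a n) @ \oo --> (1 : R).
Proof.
apply: (@cvgr_dist_le_div _ _ _ 2) => // n n0.
have np : 0 < n%:R :> R by rewrite ltr0n.
have := hconv_le n0; have := dfact_odd_gt0 n.
have hconv0 : 0 <= hconv n by rewrite hconvE ler0n.
move=> an0 hconvn.
rewrite hlodge_rec (_ : (a n - hconv n) / a n - 1 = - (hconv n / a n)); last by field; lra.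
rewrite normrN ger0_norm; last by rewrite divr_ge0 // ltW.
by rewrite ler_pdivrMr // mulrAC ler_pdivlMr // mulrC.
Qed.

Lemma dfact_stirling_cvg :
  (fun n => a n / (Num.sqrt 2 * (2 * n.+1%:R / expR 1) ^+ n.+1)) @ \oo --> (1 : R).
Proof.
pose v n := stirling_err R (2 * n.+1) - stirling_err R n.+1.
have v0 : v @ \oo --> 0.
  apply: (@cvgr_dist_le_div _ _ _ 4^-1) => // n n0.
  have np : 0 < n%:R :> R by rewrite ltr0n.
  rewrite subr0 /v distrC; apply: le_trans (stirling_err_double R (ltn0Sn n)) _.
  rewrite -invfM lef_pV2 ?posrE ?mulr_gt0 ?ltr0n //.
  by rewrite ler_pM2l ?ler_nat //; lra.
under eq_cvg do rewrite /a dfact_stirling_ratio.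
rewrite -expR0; apply: (@continuous_cvg _ _ _ _ _ v expR 0) => //.
exact: continuous_expR.
Qed.

End Proposition1.

Theorem proposition1 (R : realType) :
  (forall n : nat, (1 <= n)%N ->
     ((hlodge n)%:R : R) =
       (dfact (2 * n + 1)%N)%:R
       - \sum_(k < n) ((dfact (2 * k + 1)%N)%:R * (hlodge (n - 1 - k)%N)%:R))
  /\ (forall n : nat, (1 <= n)%N ->
     ((dfact (2 * n + 1)%N)%:R * ((n%:R - 2) / n%:R) <= ((hlodge n)%:R : R))
     /\ ((hlodge n)%:R <= ((dfact (2 * n + 1)%N)%:R : R)))
  /\ ((fun n : nat => ((hlodge n)%:R : R) / (dfact (2 * n + 1)%N)%:R) @ \oo --> (1 : R))
  /\ ((fun n : nat => ((dfact (2 * n + 1)%N)%:R : R)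
         / (Num.sqrt 2 * (2 * n.+1%:R / expR 1) ^+ n.+1)) @ \oo --> (1 : R)).
Proof.
split; first by move=> n _; apply: hlodge_rec.
split; first by move=> n n1; split; [apply: hlodge_lower | apply: hlodge_upper].
by split; [apply: hlodge_ratio_cvg | apply: dfact_stirling_cvg].
Qed.
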